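(* Let $\{A_\nu\mid\nu\in\Lambda\}$ be a family of locally $C^{\ast}$-algebras. The Cartesian product $A=\prod_{\nu\in\Lambda}A_\nu$ with the product topology is an annihilator algebra if and only if every $A_\nu$ is an annihilator algebra.
   Context: Locally $C^{\ast}$-algebra: complete Hausdorff locally convex ${}^{\ast}$-algebra over $\mathbb{C}$ with jointly continuous multiplication, topology given by $C^{\ast}$-seminorms. Annihilator algebra: for every closed left ideal $J$ and closed right ideal $K$, $\mathrm{ran}(J)=0\iff J=A$ and $\mathrm{lan}(K)=0\iff K=A$, where $\mathrm{lan},\mathrm{ran}$ are left/right annihilators. *)

From HB Require Import structures.
From mathcomp Require Import all_boot all_order all_algebra.
From mathcomp Require Import complex reals.
Set Implicit Arguments. Unset Strict Implicit. Unset Printing Implicit Defensive.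
Import Order.TTheory GRing.Theory Num.Theory.
Local Open Scope ring_scope.

(* Raw data of a topological *-algebra over C = R[i] whose topology is
   generated by a family of seminorms [sn i], i : idx. *)
Record alg_data (R : realType) := AlgData {
  car  : Type;
  zero : car;
  add  : car -> car -> car;
  opp  : car -> car;
  scal : R[i] -> car -> car;
  mul  : car -> car -> car;
  star : car -> car;
  idx  : Type;
  sn   : idx -> car -> R }.
Arguments car {R} a.  Arguments zero {R} a.  Arguments add {R} a _ _.
Arguments opp {R} a _.  Arguments scal {R} a _ _.  Arguments mul {R} a _ _.
Arguments star {R} a _.  Arguments idx {R} a.  Arguments sn {R} a _ _.

Section LCstar.
Variable R : realType.
Variable A : alg_data R.
Local Notation X := (car A).
Local Notation "0A" := (zero A).
Local Notation "x |+| y" := (add A x y) (at level 50, left associativity).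
Local Notation "|-| x" := (opp A x) (at level 35).
Local Notation "x |-| y" := (add A x (opp A y)) (at level 50, left associativity).
Local Notation "a *:: x" := (scal A a x) (at level 40).
Local Notation "x |*| y" := (mul A x y) (at level 40, left associativity).

Definition directed (D : Type) (le : D -> D -> Prop) :=
  [/\ (forall d, le d d), (forall a b c, le a b -> le b c -> le a c),
      inhabited D & (forall a b, exists c, le a c /\ le b c)].

Definition cauchy_net (D : Type) (le : D -> D -> Prop) (x : D -> X) :=
  forall (i : idx A) (eps : R), 0 < eps -> exists d0, forall d1 d2,
    le d0 d1 -> le d0 d2 -> sn A i (x d1 |-| x d2) < eps.

Definition net_converges (D : Type) (le : D -> D -> Prop) (x : D -> X) (a : X) :=
  forall (i : idx A) (eps : R), 0 < eps -> exists d0, forall d,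
    le d0 d -> sn A i (x d |-| a) < eps.

Definition is_locally_Cstar : Prop :=
      (forall x y z, x |+| (y |+| z) = (x |+| y) |+| z)/\
      (forall x y, x |+| y = y |+| x)/\
      (forall x, x |+| 0A = x)/\
      (forall x, x |+| (|-| x) = 0A)/\
      (forall (a b : R[i]) x, a *:: (b *:: x) = (a * b) *:: x)/\
      (forall x, 1 *:: x = x)/\
      (forall (a b : R[i]) x, (a + b) *:: x = (a *:: x) |+| (b *:: x))/\
      (forall a x y, a *:: (x |+| y) = (a *:: x) |+| (a *:: y)) /\
      (forall x y z, x |*| (y |*| z) = (x |*| y) |*| z)/\
      (forall x y z, x |*| (y |+| z) = (x |*| y) |+| (x |*| z))/\
      (forall x y z, (x |+| y) |*| z = (x |*| z) |+| (y |*| z))/\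
      (forall a x y, a *:: (x |*| y) = (a *:: x) |*| y)/\
      (forall a x y, a *:: (x |*| y) = x |*| (a *:: y)) /\
      (forall x, star A (star A x) = x)/\
      (forall x y, star A (x |+| y) = star A x |+| star A y)/\
      (forall a x, star A (a *:: x) = conjc a *:: star A x)/\
      (forall x y, star A (x |*| y) = star A y |*| star A x) /\
      (forall i x, 0 <= sn A i x)/\
      (forall i x y, sn A i (x |+| y) <= sn A i x + sn A i y)/\
      (forall i a x, sn A i (a *:: x) = Normc.normc a * sn A i x)/\
      (forall i x y, sn A i (x |*| y) <= sn A i x * sn A i y)/\
      (forall i x, sn A i (star A x |*| x) = sn A i x ^+ 2) /\
      (forall x, (forall i, sn A i x = 0) -> x = 0A) /\
      (forall (D : Type) (le : D -> D -> Prop) (x : D -> X),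
         directed le -> cauchy_net le x -> exists a, net_converges le x a)
   .

Definition closed_set (S : X -> Prop) : Prop :=
  forall x, (forall (n : nat) (F : nat -> idx A) (eps : R), 0 < eps ->
     exists y, S y /\ (forall k, (k < n)%N -> sn A (F k) (x |-| y) < eps)) -> S x.

Definition subspace (S : X -> Prop) :=
  [/\ S 0A, (forall x y, S x -> S y -> S (x |+| y)) &
      (forall a x, S x -> S (a *:: x))].

Definition left_ideal (J : X -> Prop) :=
  subspace J /\ (forall a x, J x -> J (a |*| x)).
Definition right_ideal (K : X -> Prop) :=
  subspace K /\ (forall a x, K x -> K (x |*| a)).

Definition lan (S : X -> Prop) : X -> Prop := fun x => forall s, S s -> x |*| s = 0A.
Definition ran (S : X -> Prop) : X -> Prop := fun x => forall s, S s -> s |*| x = 0A.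

Definition is_zero_set (S : X -> Prop) := forall x, S x <-> x = 0A.
Definition is_full_set (S : X -> Prop) := forall x, S x.

Definition annihilator_algebra : Prop :=
  (forall J, left_ideal J -> closed_set J -> (is_zero_set (ran J) <-> is_full_set J)) /\
  (forall K, right_ideal K -> closed_set K -> (is_zero_set (lan K) <-> is_full_set K)).
End LCstar.

(* Cartesian product with the product topology, i.e. the topology generated
   by the seminorms x |-> p (x nu), p a seminorm of A nu. *)
Definition prod_alg (R : realType) (L : Type) (A : L -> alg_data R) : alg_data R :=
  @AlgData R (forall nu, car (A nu))
    (fun nu => zero (A nu))
    (fun x y nu => add (A nu) (x nu) (y nu))
    (fun x nu => opp (A nu) (x nu))
    (fun a x nu => scal (A nu) a (x nu))
    (fun x y nu => mul (A nu) (x nu) (y nu))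
    (fun x nu => star (A nu) (x nu))
    {nu : L & idx (A nu)}
    (fun i x => sn (A (projT1 i)) (projT2 i) (x (projT1 i))).

(* Being an annihilator algebra is the conjunction of [ran J = 0 -> J = A] for
   closed left ideals [J] of [A] and of its opposite algebra (the converse
   implications hold in any faithful algebra), so it suffices to transfer that
   one-sided property between the product and its factors.  If every factor has
   it and [J] is a closed left ideal of the product with [ran J = 0], each slice
   [{a | embed nu a \in J}] is a closed left ideal of [A nu] with zero right
   annihilator, hence all of [A nu]; so [J] contains every element agreeing with
   a given [x] on finitely many coordinates, and being closed it contains [x].
   Conversely a closed left ideal [J] of [A nu] pulls back to the closed left
   ideal [{x | x nu \in J}] of the product, whose right annihilator vanishes
   because the factors are faithful: [a x = 0] for all [a] forces [x = 0], by
   the C*-identity. *)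

From Pilot Require Import Defs.
From mathcomp Require Import all_boot all_order all_algebra complex reals.
From Stdlib Require Import ClassicalEpsilon ProofIrrelevance FunctionalExtensionality.
Import GRing.Theory Num.Theory.
Local Open Scope ring_scope.
Set Implicit Arguments. Unset Strict Implicit.

Record faithful_alg (R : realType) (A : alg_data R) : Prop := FaithfulAlg {
  fa_addrA : forall x y z, Defs.add A x (Defs.add A y z) = Defs.add A (Defs.add A x y) z;
  fa_addrC : forall x y, Defs.add A x y = Defs.add A y x;
  fa_addr0 : forall x, Defs.add A x (Defs.zero A) = x;
  fa_addrN : forall x, Defs.add A x (Defs.opp A x) = Defs.zero A;
  fa_scaler0 : forall c, scal A c (Defs.zero A) = Defs.zero A;
  fa_mulA : forall x y z, Defs.mul A x (Defs.mul A y z) = Defs.mul A (Defs.mul A x y) z;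
  fa_mulr0 : forall x, Defs.mul A x (Defs.zero A) = Defs.zero A;
  fa_mul0r : forall x, Defs.mul A (Defs.zero A) x = Defs.zero A;
  fa_mul_faithful : forall x, (forall a, Defs.mul A a x = Defs.zero A) -> x = Defs.zero A;
  fa_sn0 : forall i, sn A i (Defs.zero A) = 0 }.

Lemma fa_addKr (R : realType) (A : alg_data R) (fA : faithful_alg A) u v :
  Defs.add A u (Defs.add A v (Defs.opp A u)) = v.
Proof.
by rewrite (fa_addrC fA v) (fa_addrA fA) (fa_addrN fA) (fa_addrC fA) (fa_addr0 fA).
Qed.

Definition opposite_alg (R : realType) (A : alg_data R) : alg_data R :=
  @AlgData R (car A) (Defs.zero A) (Defs.add A) (Defs.opp A) (scal A)
    (fun x y => Defs.mul A y x) (star A) (idx A) (sn A).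

(* Faithfulness on both sides comes from [x^* x = 0 -> x = 0], a consequence of
   the C*-identity and the Hausdorff property: if [a x = 0] for all [a], take [a = x^*]. *)
Lemma locally_Cstar_faithful (R : realType) (A : alg_data R) :
  is_locally_Cstar A -> faithful_alg A /\ faithful_alg (opposite_alg A).
Proof.
have normc0 : Normc.normc (0 : R[i]) = 0.
  by rewrite /Normc.normc /= expr0n /= addr0 sqrtr0.
move=> [addrA [addrC [addr0 [addrN [_ [_ [_ [scalerD [mulA [mulrDr [mulrDl
  [_ [_ [starK [starD [_ [_ [_ [_ [snZ [_ [snC [sn_sep _]]]]]]]]]]]]]]]]]]]]]]].
have add_idem_eq0 u : Defs.add A u u = u -> u = Defs.zero A.
  by move=> h; rewrite -[LHS]addr0 -(addrN u) addrA h.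
have scaler0 c : scal A c (Defs.zero A) = Defs.zero A.
  by apply: add_idem_eq0; rewrite -scalerD addr0.
have sn0 i : sn A i (Defs.zero A) = 0.
  by rewrite -(scaler0 0) snZ normc0 mul0r.
have mulr0 a : Defs.mul A a (Defs.zero A) = Defs.zero A.
  by apply: add_idem_eq0; rewrite -mulrDr addr0.
have mul0r a : Defs.mul A (Defs.zero A) a = Defs.zero A.
  by apply: add_idem_eq0; rewrite -mulrDl addr0.
have star0 : star A (Defs.zero A) = Defs.zero A.
  by apply: add_idem_eq0; rewrite -starD addr0.
have starx_x_eq0 y : Defs.mul A (star A y) y = Defs.zero A -> y = Defs.zero A.
  move=> hy; apply: sn_sep => i; apply/eqP.
  by rewrite -sqrf_eq0 -snC hy sn0.
split; split => //.
- by move=> x hx; apply: starx_x_eq0; apply: hx.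
- by move=> x y z; rewrite /= mulA.
- move=> x hx; have xstar0 : star A x = Defs.zero A.
    by apply: starx_x_eq0; rewrite starK; apply: hx.
  by rewrite -(starK x) xstar0 star0.
Qed.

Definition ran_zero_full (R : realType) (A : alg_data R) :=
  forall J, left_ideal J -> closed_set J -> is_zero_set (@ran R A J) -> is_full_set J.

Lemma ran_full_zero (R : realType) (A : alg_data R) (J : car A -> Prop) :
  faithful_alg A -> is_full_set J -> is_zero_set (ran J).
Proof.
move=> fA Jfull x; split=> [xJ | -> s _]; last exact: fa_mulr0 fA s.
by apply: (fa_mul_faithful fA) => a; apply: xJ.
Qed.

(* A right ideal of [A] is a left ideal of [opposite_alg A], and [lan] becomes [ran]. *)
Lemma annihilator_algebraE (R : realType) (A : alg_data R) :
  faithful_alg A -> faithful_alg (opposite_alg A) ->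
  annihilator_algebra A <-> ran_zero_full A /\ ran_zero_full (opposite_alg A).
Proof.
move=> fA fAop; split=> [[hl hr] | [hl hr]]; split=> J hJ Jc.
- by move=> /(hl J hJ Jc).
- by move=> /(hr J hJ Jc).
- by split; [exact: hl | exact: ran_full_zero].
- by split; [exact: hr | exact: (@ran_full_zero _ (opposite_alg A))].
Qed.

Section Product.
Variables (R : realType) (L : Type) (A : L -> alg_data R).
Local Notation P := (prod_alg A).

Definition embed (nu : L) (a : car (A nu)) : car P := fun m =>
  match excluded_middle_informative (nu = m) with
  | left e => eq_rect nu (fun m => car (A m)) a m e
  | right _ => Defs.zero (A m)
  end.
Arguments embed : clear implicits.

Lemma embed_at nu a : embed nu a nu = a.
Proof.
rewrite /embed; case: excluded_middle_informative => [e|]; last by [].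
by rewrite (proof_irrelevance _ e erefl).
Qed.

Lemma embed_off nu a m : nu <> m -> embed nu a m = Defs.zero (A m).
Proof. by rewrite /embed; case: excluded_middle_informative. Qed.

Lemma embed_unique nu a (x : car P) :
  x nu = a -> (forall m, nu <> m -> x m = Defs.zero (A m)) -> embed nu a = x.
Proof.
move=> xnu xoff; apply: functional_extensionality_dep => m.
case: (excluded_middle_informative (nu = m)) => [<-|ne].
  by rewrite embed_at.
by rewrite embed_off // xoff.
Qed.

Lemma closed_proj_preimage nu (S : car (A nu) -> Prop) :
  closed_set S -> closed_set (A := P) (fun x => S (x nu)).
Proof.
move=> Sc x xcl; apply: Sc => n F eps eps0.
have [y [Sy yF]] := xcl n (fun k => existT _ nu (F k)) eps eps0.
by exists (y nu); split=> // k /yF.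
Qed.

Lemma left_ideal_proj_preimage nu (J : car (A nu) -> Prop) :
  left_ideal J -> left_ideal (A := P) (fun x => J (x nu)).
Proof.
move=> [[J0 JD JZ] JM]; split; [split|] => //.
- by move=> x y; apply: JD.
- by move=> c x; apply: JZ.
- by move=> a x; apply: JM.
Qed.

Hypothesis fA : forall nu, faithful_alg (A nu).

Lemma embed0 nu : embed nu (Defs.zero (A nu)) = Defs.zero P.
Proof. exact: embed_unique. Qed.

Lemma embedD nu (a b : car (A nu)) :
  embed nu (Defs.add (A nu) a b) = Defs.add P (embed nu a) (embed nu b).
Proof.
apply: embed_unique => [|m ne]; first by rewrite /= !embed_at.
by rewrite /= !embed_off // (fa_addr0 (fA m)).
Qed.

Lemma embedZ nu c (a : car (A nu)) : embed nu (scal (A nu) c a) = scal P c (embed nu a).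
Proof.
apply: embed_unique => [|m ne]; first by rewrite /= !embed_at.
by rewrite /= !embed_off // (fa_scaler0 (fA m)).
Qed.

Lemma embed_mull nu (a : car (A nu)) (x : car P) :
  embed nu (Defs.mul (A nu) a (x nu)) = Defs.mul P (embed nu a) x.
Proof.
apply: embed_unique => [|m ne]; first by rewrite /= !embed_at.
by rewrite /= !embed_off // (fa_mul0r (fA m)).
Qed.

Lemma faithful_prod : faithful_alg P.
Proof.
split=> /=.
- by move=> x y z; apply: functional_extensionality_dep => m; apply: fa_addrA.
- by move=> x y; apply: functional_extensionality_dep => m; apply: fa_addrC.
- by move=> x; apply: functional_extensionality_dep => m; apply: fa_addr0.
- by move=> x; apply: functional_extensionality_dep => m; apply: fa_addrN.
- by move=> c; apply: functional_extensionality_dep => m; apply: fa_scaler0.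
- by move=> x y z; apply: functional_extensionality_dep => m; apply: fa_mulA.
- by move=> x; apply: functional_extensionality_dep => m; apply: fa_mulr0.
- by move=> x; apply: functional_extensionality_dep => m; apply: fa_mul0r.
- move=> x xfaith; apply: functional_extensionality_dep => m.
  apply: (fa_mul_faithful (fA m)) => b.
  by have /(f_equal (fun y => y m)) := xfaith (embed m b); rewrite /= embed_at.
- by move=> i; apply: fa_sn0.
Qed.

Lemma closed_embed_preimage nu (S : car P -> Prop) :
  S (Defs.zero P) -> closed_set S -> closed_set (fun a => S (embed nu a)).
Proof.
move=> S0 Sc a acl; apply: Sc => n F eps eps0.
have off_small (y : car (A nu)) k : nu <> projT1 (F k) ->
    sn P (F k) (Defs.add P (embed nu a) (Defs.opp P (embed nu y))) < eps.
  by move=> ne; rewrite /= !embed_off // (fa_addrN (fA _)) (fa_sn0 (fA _)).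
case: (excluded_middle_informative (inhabited (idx (A nu)))) => [[d]|noidx].
- pose G k := match excluded_middle_informative (projT1 (F k) = nu) with
    | left e => eq_rect _ (fun m => idx (A m)) (projT2 (F k)) nu e
    | right _ => d end.
  have [y [Sy yG]] := acl n G eps eps0.
  exists (embed nu y); split=> // k /yG; rewrite /G.
  case: excluded_middle_informative => [e|ne _]; last exact/off_small/nesym.
  by move: (F k) e => [m i] /= e; subst m; rewrite /= !embed_at.
- exists (Defs.zero P); split=> // k _; rewrite -(embed0 nu); apply: off_small.
  by case: (F k) => m i /= e; apply: noidx; rewrite e; exists.
Qed.

Lemma left_ideal_embed_preimage nu (J : car P -> Prop) :
  left_ideal J -> left_ideal (fun a => J (embed nu a)).
Proof.
move=> [[J0 JD JZ] JM]; split; [split|].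
- by rewrite embed0.
- by move=> a b Ja Jb; rewrite embedD; apply: JD.
- by move=> c a Ja; rewrite embedZ; apply: JZ.
- by move=> b a Ja; have := embed_mull b (embed nu a); rewrite embed_at => ->; apply: JM.
Qed.

Lemma ran_embed_preimage nu (J : car P -> Prop) :
  left_ideal J -> is_zero_set (ran J) -> is_zero_set (ran (fun a => J (embed nu a))).
Proof.
move=> [_ JM] Jran b; split=> [bran | -> s _]; last exact: (fa_mulr0 (fA nu)).
suff /(f_equal (fun x => x nu)) : embed nu b = Defs.zero P by rewrite embed_at.
apply/Jran => x Jx.
have xb0 : Defs.mul (A nu) (x nu) b = Defs.zero (A nu).
  apply: (fa_mul_faithful (fA nu)) => a; rewrite (fa_mulA (fA nu)).
  by apply: bran; rewrite embed_mull; apply: JM.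
apply: functional_extensionality_dep => m /=.
case: (excluded_middle_informative (nu = m)) => [<-|ne]; first by rewrite embed_at.
by rewrite embed_off // (fa_mulr0 (fA m)).
Qed.

Lemma ran_proj_preimage nu (J : car (A nu) -> Prop) :
  left_ideal J -> is_zero_set (ran J) -> is_zero_set (ran (A := P) (fun x => J (x nu))).
Proof.
move=> [[J0 _ _] _] Jran x; split=> [xran | -> s _]; last exact: (fa_mulr0 faithful_prod).
apply: functional_extensionality_dep => m.
case: (excluded_middle_informative (nu = m)) => [<-|ne].
- apply/Jran => s Js.
  have Jemb : J (embed nu s nu) by rewrite embed_at.
  by have /(f_equal (fun y => y nu)) := xran _ Jemb; rewrite /= embed_at.
- apply: (fa_mul_faithful (fA m)) => b.
  have Jemb : J (embed m b nu) by rewrite embed_off //; apply: nesym.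
  by have /(f_equal (fun y => y m)) := xran _ Jemb; rewrite /= embed_at.
Qed.

Lemma full_of_embeds (J : car P -> Prop) :
  subspace J -> closed_set J -> (forall nu a, J (embed nu a)) -> is_full_set J.
Proof.
move=> [J0 JD _] Jc Jemb x; apply: Jc => n F eps eps0.
have agree p : exists y, J y /\ forall k, (k < p)%N -> y (projT1 (F k)) = x (projT1 (F k)).
  elim: p => [|p [y [Jy yx]]]; first by exists (Defs.zero P).
  pose nu := projT1 (F p).
  exists (Defs.add P y (embed nu (Defs.add (A nu) (x nu) (Defs.opp (A nu) (y nu))))).
  split=> [|k kp /=]; first exact: JD.
  case: (excluded_middle_informative (nu = projT1 (F k))) => [<-|ne].
    by rewrite embed_at (fa_addKr (fA nu)).
  rewrite embed_off // (fa_addr0 (fA _)) yx //.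
  by move: kp; rewrite ltnS leq_eqVlt => /orP [/eqP kp|//]; case: ne; rewrite kp.
have [y [Jy yx]] := agree n.
by exists y; split=> // k kn /=; rewrite yx // (fa_addrN (fA _)) (fa_sn0 (fA _)).
Qed.

Lemma ran_zero_full_prod : (forall nu, ran_zero_full (A nu)) -> ran_zero_full P.
Proof.
move=> hA J hJ Jc Jran; apply: (full_of_embeds hJ.1 Jc) => nu.
apply: (hA nu); first exact: left_ideal_embed_preimage.
- by apply: closed_embed_preimage Jc; case: hJ => [[]].
- exact: ran_embed_preimage.
Qed.

Lemma ran_zero_full_component : ran_zero_full P -> forall nu, ran_zero_full (A nu).
Proof.
move=> hP nu J hJ Jc Jran a.
suff /(_ (embed nu a)) : is_full_set (A := P) (fun x => J (x nu)) by rewrite embed_at.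
apply: hP; first exact: left_ideal_proj_preimage.
- exact: closed_proj_preimage.
- exact: ran_proj_preimage.
Qed.

End Product.

Lemma prod_opposite (R : realType) (L : Type) (A : L -> alg_data R) :
  prod_alg (fun nu => opposite_alg (A nu)) = opposite_alg (prod_alg A).
Proof. by []. Qed.

Theorem proposition3p28 (R : realType) (L : Type) (A : L -> alg_data R) :
  (forall nu, is_locally_Cstar (A nu)) ->
  (annihilator_algebra (prod_alg A) <-> forall nu, annihilator_algebra (A nu)).
Proof.
move=> hA.
have fA nu := (locally_Cstar_faithful (hA nu)).1.
have fAop nu := (locally_Cstar_faithful (hA nu)).2.
have annE nu := annihilator_algebraE (fA nu) (fAop nu).
have fP : faithful_alg (prod_alg A) := faithful_prod fA.
have fPop : faithful_alg (opposite_alg (prod_alg A)).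
  by rewrite -prod_opposite; exact: faithful_prod fAop.
rewrite (annihilator_algebraE fP fPop) -prod_opposite.
split=> [[hl hr] nu | h].
  by rewrite annE; split; [exact: ran_zero_full_component fA hl nu |
                           exact: ran_zero_full_component fAop hr nu].
by split; [apply: ran_zero_full_prod fA _ | apply: ran_zero_full_prod fAop _]
   => nu; have /annE[] := h nu.
Qed.
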